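(* The multi-observation inverse optimization model $\mathbf{IO}(\mathbf{X})$ is feasible.
   Context: Forward problem $\mathbf{FO}(\mathbf{c})$: maximize $\mathbf{c}'\mathbf{x}$ subject to $\mathbf{A}\mathbf{x}\ge\mathbf{b}$ (relevant constraints, $\mathbf{A}\in\mathbb{R}^{m_1\times n}$, $m_1\ge1$, rows $\mathbf{a}_j$), $\mathbf{W}\mathbf{x}\ge\mathbf{q}$ (trivial constraints), $\mathbf{x}\in\mathbb{R}^n$. Its feasible region $\chi$ is assumed nonempty, full-dimensional and free of redundant constraints. Given observations $\mathbf{X}=\{\mathbf{x}^k\in\mathbb{R}^n: k\in\mathcal{K}=\{1,\dots,K\}\}$ (feasible or infeasible), the multi-observation inverse optimization model is $\mathbf{IO}(\mathbf{X})$: minimize over $\mathbf{c},\mathbf{y},\mathbf{E},\mathbf{z}$ the distance measure $\mathscr{D}(\mathbf{E},\mathbf{A})\ge 0$ subject to $\mathbf{A}\mathbf{z}\ge\mathbf{b}$, $\mathbf{W}\mathbf{z}\ge\mathbf{q}$, $\mathbf{c}'\mathbf{z}=\mathbf{b}'\mathbf{y}$, $\mathbf{z}=\mathbf{x}^k-\epsilon^k$ for all $k\in\mathcal{K}$, $\mathbf{A}'\mathbf{y}=\mathbf{c}$, $\|\mathbf{c}\|_L=1$, $\mathbf{y}\ge\mathbf{0}$, with $\mathbf{c},\mathbf{z}\in\mathbb{R}^n$, $\mathbf{y}\in\mathbb{R}^{m_1}$, $\mathbf{E}\in\mathbb{R}^{n\times K}$ whose $k$-th column is $\epsilon^k$.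 *)

From mathcomp Require Import all_boot all_order all_algebra.
Set Implicit Arguments. Unset Strict Implicit. Unset Printing Implicit Defensive.
Import Order.TTheory GRing.Theory Num.Theory.
Local Open Scope ring_scope.

Definition vge (R : realFieldType) (m : nat) (u v : 'cV[R]_m) : Prop :=
  forall i : 'I_m, v i 0 <= u i 0.

Definition is_norm (R : realFieldType) (n : nat) (N : 'cV[R]_n -> R) : Prop :=
  [/\ forall x, 0 <= N x,
      forall x, N x = 0 -> x = 0,
      forall (a : R) x, N (a *: x) = `|a| * N x
    & forall x y, N (x + y) <= N x + N y].

Definition feas_region (R : realFieldType) (n m1 m2 : nat)
  (A : 'M[R]_(m1, n)) (b : 'cV[R]_m1) (W : 'M[R]_(m2, n)) (q : 'cV[R]_m2)
  (x : 'cV[R]_n) : Prop :=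
  vge (A *m x) b /\ vge (W *m x) q.

Definition nonempty_region (R : realFieldType) (n m1 m2 : nat)
  (A : 'M[R]_(m1, n)) (b : 'cV[R]_m1) (W : 'M[R]_(m2, n)) (q : 'cV[R]_m2) : Prop :=
  exists x, feas_region A b W q x.

(* full-dimensional: chi has nonempty interior (contains a sup-norm ball) *)
Definition full_dimensional (R : realFieldType) (n m1 m2 : nat)
  (A : 'M[R]_(m1, n)) (b : 'cV[R]_m1) (W : 'M[R]_(m2, n)) (q : 'cV[R]_m2) : Prop :=
  exists (x0 : 'cV[R]_n) (r : R), 0 < r /\
    forall x : 'cV[R]_n, (forall i : 'I_n, `|x i 0 - x0 i 0| < r) ->
      feas_region A b W q x.

(* no redundant constraints: removing any single constraint (relevant or
   trivial) strictly enlarges the feasible region, i.e. some point satisfies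
   all the other constraints but violates the removed one *)
Definition no_redundant (R : realFieldType) (n m1 m2 : nat)
  (A : 'M[R]_(m1, n)) (b : 'cV[R]_m1) (W : 'M[R]_(m2, n)) (q : 'cV[R]_m2) : Prop :=
  (forall j : 'I_m1, exists x : 'cV[R]_n,
      (forall i : 'I_m1, i != j -> b i 0 <= (A *m x) i 0) /\
      vge (W *m x) q /\ (A *m x) j 0 < b j 0) /\
  (forall j : 'I_m2, exists x : 'cV[R]_n,
      vge (A *m x) b /\
      (forall i : 'I_m2, i != j -> q i 0 <= (W *m x) i 0) /\
      (W *m x) j 0 < q j 0).

(* Feasibility of IO(X): the observations are the columns of X : 'M_(n, K).
   The constraint set of IO(X) (the objective D(E,A) plays no role). *)
Definition IO_feasible_point (R : realFieldType) (n m1 m2 K : nat)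
  (A : 'M[R]_(m1, n)) (b : 'cV[R]_m1) (W : 'M[R]_(m2, n)) (q : 'cV[R]_m2)
  (N : 'cV[R]_n -> R) (X : 'M[R]_(n, K))
  (c : 'cV[R]_n) (y : 'cV[R]_m1) (E : 'M[R]_(n, K)) (z : 'cV[R]_n) : Prop :=
  vge (A *m z) b /\
  vge (W *m z) q /\
  (c^T *m z) 0 0 = (b^T *m y) 0 0 /\
  (forall k : 'I_K, z = col k X - col k E) /\
  A^T *m y = c /\
  N c = 1 /\
  vge y 0.

Definition IO_feasible (R : realFieldType) (n m1 m2 K : nat)
  (A : 'M[R]_(m1, n)) (b : 'cV[R]_m1) (W : 'M[R]_(m2, n)) (q : 'cV[R]_m2)
  (N : 'cV[R]_n -> R) (X : 'M[R]_(n, K)) : Prop :=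
  exists c y E z, IO_feasible_point A b W q N X c y E z.

From mathcomp Require Import all_boot all_order all_algebra.
From mathcomp Require Import ring.
Set Implicit Arguments. Unset Strict Implicit. Unset Printing Implicit Defensive.
Import Order.TTheory GRing.Theory Num.Theory.
Local Open Scope ring_scope.

(* Non-redundancy of a relevant constraint a_j x >= b_j yields a point x1 that
   violates it while satisfying every other constraint; on the segment from a
   feasible x0 to x1 there is a feasible point z with a_j z = b_j, and a_j <> 0.
   Then c = a_j / ||a_j||, y = e_j / ||a_j|| is dual feasible with
   c'z = b_j / ||a_j|| = b'y, and z is reached from every observation x^k by
   the perturbation eps^k = x^k - z. *)

Section ConvexCombination.

Variable R : realFieldType.

Lemma ler_convex_comb (t u v w : R) :
  0 <= t <= 1 -> w <= u -> w <= v -> w <= (1 - t) * u + t * v.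
Proof.
move=> /andP[t_ge0 t_le1] wu wv.
have -> : w = (1 - t) * w + t * w by ring.
by rewrite lerD // ler_wpM2l // subr_ge0.
Qed.

Lemma exists_convex_hit (u v w : R) :
  v < w -> w <= u -> exists2 t, 0 <= t <= 1 & (1 - t) * u + t * v = w.
Proof.
move=> vw wu; have uv : 0 < u - v by rewrite subr_gt0 (lt_le_trans vw).
exists ((u - w) / (u - v)).
  by rewrite divr_ge0 ?(ltW uv) ?subr_ge0 //= ler_pdivrMr // mul1r lerD2l lerN2 ltW.
by field; rewrite lt0r_neq0.
Qed.

Lemma mulmx_convex_entry (m p : nat) (M : 'M[R]_(m, p)) (x0 x1 : 'cV[R]_p)
    (t : R) (i : 'I_m) :
  (M *m ((1 - t) *: x0 + t *: x1)) i 0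
  = (1 - t) * (M *m x0) i 0 + t * (M *m x1) i 0.
Proof. by rewrite mulmxDr -!scalemxAr !mxE. Qed.

Lemma vge_mul_convex (m p : nat) (M : 'M[R]_(m, p)) (v : 'cV[R]_m)
    (x0 x1 : 'cV[R]_p) (t : R) :
  0 <= t <= 1 -> vge (M *m x0) v -> vge (M *m x1) v ->
  vge (M *m ((1 - t) *: x0 + t *: x1)) v.
Proof.
by move=> t01 Mx0 Mx1 i; rewrite mulmx_convex_entry; apply: ler_convex_comb.
Qed.

End ConvexCombination.

Lemma mulmx_row_entry (R : pzRingType) (m p : nat) (M : 'M[R]_(m, p))
    (x : 'cV[R]_p) (i : 'I_m) :
  (M *m x) i 0 = (row i M *m x) 0 0.
Proof. by rewrite -row_mul [RHS]mxE. Qed.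

Lemma row_neq0_of_separating (R : pzRingType) (m p : nat) (M : 'M[R]_(m, p))
    (x y : 'cV[R]_p) (i : 'I_m) :
  (M *m x) i 0 != (M *m y) i 0 -> row i M != 0.
Proof.
apply: contraNneq => Mi0.
by rewrite [(M *m x) i 0]mulmx_row_entry [(M *m y) i 0]mulmx_row_entry Mi0 !mul0mx.
Qed.

Section Norm.

Variables (R : realFieldType) (n : nat) (N : 'cV[R]_n -> R).
Hypothesis normN : is_norm N.

Lemma is_norm_gt0 (v : 'cV[R]_n) : v != 0 -> 0 < N v.
Proof.
case: normN => N_ge0 N_eq0 _ _ v_neq0.
by rewrite lt_def N_ge0 andbT; apply: contra_neq v_neq0; apply: N_eq0.
Qed.

Lemma is_norm_normalize (v : 'cV[R]_n) : v != 0 -> N ((N v)^-1 *: v) = 1.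
Proof.
move=> /is_norm_gt0 Nv_gt0; case: normN => _ _ NZ _.
by rewrite NZ ger0_norm ?invr_ge0 ?ltW // mulVf ?lt0r_neq0.
Qed.

End Norm.

Section InverseOptimization.

Variables (R : realFieldType) (n m1 m2 : nat).
Variables (A : 'M[R]_(m1, n)) (b : 'cV[R]_m1) (W : 'M[R]_(m2, n)) (q : 'cV[R]_m2).

Lemma exists_binding_point (j : 'I_m1) (x0 x1 : 'cV[R]_n) :
  feas_region A b W q x0 ->
  (forall i : 'I_m1, i != j -> b i 0 <= (A *m x1) i 0) ->
  vge (W *m x1) q -> (A *m x1) j 0 < b j 0 ->
  exists2 z, feas_region A b W q z & (A *m z) j 0 = b j 0.
Proof.
move=> [Ax0 Wx0] Ax1 Wx1 Ax1j.
have [t t01 tj] := exists_convex_hit Ax1j (Ax0 j).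
exists ((1 - t) *: x0 + t *: x1); last by rewrite mulmx_convex_entry.
split; last exact: vge_mul_convex.
move=> i; rewrite mulmx_convex_entry.
have [->|ij] := eqVneq i j; first by rewrite tj.
by rewrite ler_convex_comb ?Ax0 ?Ax1.
Qed.

Lemma IO_feasible_of_binding (N : 'cV[R]_n -> R) (K : nat) (X : 'M[R]_(n, K))
    (z : 'cV[R]_n) (j : 'I_m1) :
  is_norm N -> feas_region A b W q z -> (A *m z) j 0 = b j 0 ->
  row j A != 0 -> IO_feasible A b W q N X.
Proof.
move=> normN [Az Wz] zj aj_neq0.
have aj_neq0T : (row j A)^T != 0 by rewrite trmx_eq0.
pose s := (N (row j A)^T)^-1.
have s_ge0 : 0 <= s by rewrite invr_ge0 ltW ?is_norm_gt0.
exists (s *: (row j A)^T), (s *: delta_mx j 0), (X - \matrix_(i, k) z i 0), z.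
split; [done | split; [done | split; [|split; [|split; [|split]]]]].
- rewrite linearZ /= trmxK -scalemxAl -scalemxAr -colE [LHS]mxE [RHS]mxE.
  by rewrite -mulmx_row_entry zj !mxE.
- by move=> k; apply/matrixP => i l; rewrite !mxE (ord1 l); ring.
- by rewrite -scalemxAr -colE tr_row.
- exact: is_norm_normalize.
- by move=> i; rewrite !mxE mulr_ge0 ?ler0n.
Qed.

End InverseOptimization.

Theorem proposition2 (R : realFieldType) (n m1 m2 K : nat)
  (A : 'M[R]_(m1, n)) (b : 'cV[R]_m1) (W : 'M[R]_(m2, n)) (q : 'cV[R]_m2)
  (N : 'cV[R]_n -> R) (X : 'M[R]_(n, K)) :
  (0 < m1)%N ->
  is_norm N ->
  nonempty_region A b W q ->
  full_dimensional A b W q ->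
  no_redundant A b W q ->
  IO_feasible A b W q N X.
Proof.
move=> m1_gt0 normN [x0 x0_feas] _ [nonredA _].
pose j := Ordinal m1_gt0.
have [x1 [Ax1 [Wx1 Ax1j]]] := nonredA j.
have [z z_feas zj] := exists_binding_point x0_feas Ax1 Wx1 Ax1j.
apply: (IO_feasible_of_binding X normN z_feas zj).
apply: (row_neq0_of_separating (x := x1) (y := x0)).
by rewrite lt_eqF // (lt_le_trans Ax1j) //; apply: x0_feas.1.
Qed.
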